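(* Let $\sigma:\mathbb{R}\to\mathbb{R}$ satisfy Assumption 1 (stated in the context). Then there is a constant $C_\sigma>0$, depending only on $\sigma$, such that the following holds for every integer $d\ge 2$ and every $\epsilon\in(0,1)$. Let $\varphi:[0,\infty)\to\mathbb{R}$ be such that $f(\mathbf{x})=\varphi(\|\mathbf{x}\|)$ is $1$-Lipschitz on $\mathbb{R}^d$. Then there exists a depth-$2$ $\sigma$-network of width $$w\le \exp\!\big(C_\sigma\,\epsilon^{-9}\log(d/\epsilon)\big),$$ i.e. parameters $b_0,v_i,b_i\in\mathbb{R}$ and $\mathbf{w}_i\in\mathbb{R}^d$, $i=1,\dots,w$, such that $$\sup_{\mathbf{x}\in B_d}\Big|\sum_{i=1}^{w}v_i\,\sigma(\mathbf{w}_i^{\top}\mathbf{x}+b_i)+b_0-f(\mathbf{x})\Big|\le\epsilon .$$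
   Context: $\|\cdot\|$ is the Euclidean norm and $B_d=\{\mathbf{x}\in\mathbb{R}^d:\|\mathbf{x}\|\le 1\}$. A depth-$2$ network of width $w$ with activation $\sigma$ is a function $\mathbf{x}\mapsto\sum_{i=1}^{w}v_i\sigma(\mathbf{w}_i^\top\mathbf{x}+b_i)+b_0$. Assumption 1: there is a constant $c_\sigma\ge 1$ (depending only on $\sigma$) such that for every $L$-Lipschitz function $g:\mathbb{R}\to\mathbb{R}$ which is constant outside an interval $[-R,R]$, and every $\delta>0$, there exist scalars $a,\{\alpha_i,\beta_i,\gamma_i\}_{i=1}^{w}$ with $w\le c_\sigma RL/\delta$ such that $h(x)=a+\sum_{i=1}^{w}\alpha_i\sigma(\beta_i x-\gamma_i)$ satisfies $\sup_{x\in\mathbb{R}}|g(x)-h(x)|\le\delta$. *)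

(* classical reals. Vectors in R^d are represented as
   functions nat -> R, of which only the coordinates 0..d-1 are used. *)
From Stdlib Require Import Reals.
Open Scope R_scope.

Fixpoint sumR (n : nat) (f : nat -> R) : R :=
  match n with
  | O => 0
  | S m => sumR m f + f m
  end.

Definition dotR (d : nat) (u x : nat -> R) : R := sumR d (fun k => u k * x k).

Definition normR (d : nat) (x : nat -> R) : R := sqrt (sumR d (fun k => x k ^ 2)).

Definition Assumption1 (sigma : R -> R) (c : R) : Prop :=
  1 <= c /\
  forall (g : R -> R) (L Rad delta : R),
    0 <= Rad -> 0 < delta ->
    (forall x y, Rabs (g x - g y) <= L * Rabs (x - y)) ->
    (exists k, forall x, (x < - Rad \/ Rad < x) -> g x = k) ->
    exists (w : nat) (a : R) (alpha beta gamma : nat -> R),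
      INR w <= c * Rad * L / delta /\
      forall x, Rabs (g x - (a + sumR w (fun i => alpha i * sigma (beta i * x - gamma i)))) <= delta.

(** Write [f(x) = phi(|x|) = profile(|x|^2) + phi(0)] with
    [profile(t) = phi(sqrt t) - phi(0)]; as [f] is 1-Lipschitz, the profile is
    1/2-Hölder and bounded by 1 on [[0,1]].  The proof has four layers:
    - a calculus of approximability by networks ([Approx]): constants, scalar
      multiples, sums, and ridge functions [g(u.x)] via Assumption 1;
    - polarization: [2^k k! y1...yk] is the [k]-fold symmetric difference of
      [z^k], so a product of [2m] linear forms is a signed sum of [2^(2m)] powers
      [(u.x)^(2m)], each a ridge function of the Lipschitz map [clamp(z)^(2m)];
      expanding [|x|^(2m)] into [d^m] such products gives networks for it;
    - Bernstein's theorem for 1/2-Hölder functions (via the variance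
      [t(1-t)/n]): the Bernstein polynomial of degree [n >= 256/eps^4]
      approximates the profile within [eps/2], and in the monomial basis it
      involves [(n+1)^2] terms [coef * |x|^(2j)] with [|coef| <= 4^n];
    - bookkeeping: with ridge errors chosen so that the errors add up to
      [eps/2], the total width is at most [exp(C eps^-9 ln(d/eps))]. *)

From Stdlib Require Import Reals Lra Lia List ZArith.
Open Scope R_scope.

Lemma sumR_ext n f g :
  (forall i, (i < n)%nat -> f i = g i) -> sumR n f = sumR n g.
Proof.
  revert f g; induction n as [|n IH]; intros f g H; simpl; [reflexivity|].
  rewrite (IH f g) by (intros; apply H; lia); rewrite H by lia; reflexivity.
Qed.

Lemma sumR_add n f g : sumR n (fun i => f i + g i) = sumR n f + sumR n g.
Proof. induction n; simpl; [lra|rewrite IHn; lra]. Qed.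

Lemma sumR_scal n a f : sumR n (fun i => a * f i) = a * sumR n f.
Proof. induction n; simpl; [lra|rewrite IHn; lra]. Qed.

Lemma sumR_const n a : sumR n (fun _ => a) = INR n * a.
Proof. induction n; simpl sumR; [simpl; lra|rewrite IHn, S_INR; lra]. Qed.

Lemma sumR_app w1 w2 f :
  sumR (w1 + w2) f = sumR w1 f + sumR w2 (fun i => f (w1 + i)%nat).
Proof.
  induction w2; simpl.
  - rewrite Nat.add_0_r; lra.
  - rewrite <- plus_n_Sm; simpl; rewrite IHw2; lra.
Qed.

Lemma sumR_shift n f : sumR (S n) f = f O + sumR n (fun i => f (S i)).
Proof. revert f; induction n; intros f; simpl in *; [lra|rewrite IHn; simpl; lra]. Qed.

Lemma sumR_le n f g :
  (forall i, (i < n)%nat -> f i <= g i) -> sumR n f <= sumR n g.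
Proof.
  revert f g; induction n; intros f g H; simpl; [lra|].
  pose proof (IHn f g (fun i Hi => H i ltac:(lia))); pose proof (H n ltac:(lia)); lra.
Qed.

Lemma sumR_abs n f : Rabs (sumR n f) <= sumR n (fun i => Rabs (f i)).
Proof.
  induction n; simpl; [rewrite Rabs_R0; lra|].
  eapply Rle_trans; [apply Rabs_triang|lra].
Qed.

Lemma sumR_nonneg n f : (forall i, (i < n)%nat -> 0 <= f i) -> 0 <= sumR n f.
Proof.
  intros H; rewrite <- (Rmult_0_r (INR n)), <- sumR_const; apply sumR_le; auto.
Qed.

Lemma sumR_single n k f :
  (k < n)%nat -> sumR n (fun j => if Nat.eqb j k then f j else 0) = f k.
Proof.
  revert k; induction n as [|n IH]; intros k Hk; [lia|simpl].
  destruct (Nat.eq_dec k n) as [->|Hne].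
  - rewrite Nat.eqb_refl, (sumR_ext n _ (fun _ => 0)), sumR_const; [ring|].
    intros i Hi; rewrite (proj2 (Nat.eqb_neq i n)) by lia; reflexivity.
  - rewrite IH, (proj2 (Nat.eqb_neq n k)) by lia; ring.
Qed.

(** Translation to the standard library's [sum_f_R0] (which sums [n+1] terms). *)
Lemma sum_f_R0_sumR f n : sum_f_R0 f n = sumR (S n) f.
Proof. induction n; simpl in *; [lra|rewrite IHn; simpl; lra]. Qed.

(** * A calculus of approximability by depth-2 networks *)

Section Networks.
Variable d : nat.
Variable sigma : R -> R.

Definition Net (w : nat) (v b : nat -> R) (W : nat -> nat -> R) (b0 : R)
  (x : nat -> R) : R :=
  sumR w (fun i => v i * sigma (dotR d (W i) x + b i)) + b0.

Definition Approx (F : (nat -> R) -> R) (Wd e : R) : Prop :=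
  exists w v b W b0, INR w <= Wd /\
    forall x, normR d x <= 1 -> Rabs (Net w v b W b0 x - F x) <= e.

Lemma Approx_mono F G Wd e Wd' e' :
  Approx F Wd e -> Wd <= Wd' -> e <= e' ->
  (forall x, normR d x <= 1 -> F x = G x) -> Approx G Wd' e'.
Proof.
  intros (w & v & b & W & b0 & Hw & HF) HW He HFG.
  exists w, v, b, W, b0; split; [lra|].
  intros x Hx; rewrite <- HFG by exact Hx; specialize (HF x Hx); lra.
Qed.

Lemma Approx_close F G Wd e e' :
  Approx F Wd e -> (forall x, normR d x <= 1 -> Rabs (F x - G x) <= e') ->
  Approx G Wd (e + e').
Proof.
  intros (w & v & b & W & b0 & Hw & HF) HFG.
  exists w, v, b, W, b0; split; [exact Hw|].
  intros x Hx; specialize (HF x Hx); specialize (HFG x Hx).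
  replace (Net w v b W b0 x - G x) with ((Net w v b W b0 x - F x) + (F x - G x)) by ring.
  eapply Rle_trans; [apply Rabs_triang|lra].
Qed.

Lemma Approx_const a : Approx (fun _ => a) 0 0.
Proof.
  exists O, (fun _ => 0), (fun _ => 0), (fun _ _ => 0), a; split; [simpl; lra|].
  intros x _; unfold Net; simpl.
  replace (0 + a - a) with 0 by ring; rewrite Rabs_R0; lra.
Qed.

Lemma Approx_scal F Wd e a :
  Approx F Wd e -> Approx (fun x => a * F x) Wd (Rabs a * e).
Proof.
  intros (w & v & b & W & b0 & Hw & HF).
  exists w, (fun i => a * v i), b, W, (a * b0); split; [exact Hw|].
  intros x Hx; unfold Net in *.
  assert (E : sumR w (fun i => a * v i * sigma (dotR d (W i) x + b i))
            = a * sumR w (fun i => v i * sigma (dotR d (W i) x + b i))).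
  { rewrite <- sumR_scal; apply sumR_ext; intros; ring. }
  rewrite E, <- Rmult_plus_distr_l, <- Rmult_minus_distr_l, Rabs_mult.
  apply Rmult_le_compat_l; [apply Rabs_pos|auto].
Qed.

Definition juxtapose {A} (w1 : nat) (f1 f2 : nat -> A) : nat -> A :=
  fun i => if Nat.ltb i w1 then f1 i else f2 (i - w1)%nat.

Lemma Approx_add F1 F2 W1 W2 e1 e2 :
  Approx F1 W1 e1 -> Approx F2 W2 e2 ->
  Approx (fun x => F1 x + F2 x) (W1 + W2) (e1 + e2).
Proof.
  intros (w1 & v1 & b1 & M1 & c1 & Hw1 & K1) (w2 & v2 & b2 & M2 & c2 & Hw2 & K2).
  exists (w1 + w2)%nat, (juxtapose w1 v1 v2), (juxtapose w1 b1 b2),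
    (juxtapose w1 M1 M2), (c1 + c2).
  split; [rewrite plus_INR; lra|].
  intros x Hx; specialize (K1 x Hx); specialize (K2 x Hx); unfold Net in *.
  rewrite sumR_app.
  rewrite (sumR_ext w1 _ (fun i => v1 i * sigma (dotR d (M1 i) x + b1 i))).
  2: { intros i Hi; unfold juxtapose.
       rewrite (proj2 (Nat.ltb_lt i w1)) by lia; reflexivity. }
  rewrite (sumR_ext w2 _ (fun i => v2 i * sigma (dotR d (M2 i) x + b2 i))).
  2: { intros i Hi; unfold juxtapose.
       rewrite (proj2 (Nat.ltb_ge (w1 + i) w1)) by lia.
       replace (w1 + i - w1)%nat with i by lia; reflexivity. }
  eapply Rle_trans; [|apply Rplus_le_compat; [apply K1|apply K2]].
  eapply Rle_trans; [|apply Rabs_triang]; right; f_equal; ring.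
Qed.

Lemma Approx_sub F1 F2 W1 W2 e1 e2 :
  Approx F1 W1 e1 -> Approx F2 W2 e2 ->
  Approx (fun x => F1 x - F2 x) (W1 + W2) (e1 + e2).
Proof.
  intros H1 H2.
  apply (Approx_mono _ _ _ _ _ _ (Approx_add _ _ _ _ _ _ H1 (Approx_scal _ _ _ (-1) H2))).
  - lra.
  - rewrite Rabs_left by lra; lra.
  - intros; ring.
Qed.

Lemma Approx_sumR n (F : nat -> (nat -> R) -> R) Wd e :
  (forall k, (k < n)%nat -> Approx (F k) Wd e) ->
  Approx (fun x => sumR n (fun k => F k x)) (INR n * Wd) (INR n * e).
Proof.
  revert F; induction n as [|n IH]; intros F H.
  - apply (Approx_mono _ _ _ _ _ _ (Approx_const 0)); simpl; intros; lra.
  - apply (Approx_mono _ _ _ _ _ _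
             (Approx_add _ _ _ _ _ _ (IH F (fun k Hk => H k ltac:(lia))) (H n ltac:(lia))));
      rewrite ?S_INR; intros; simpl; lra.
Qed.

Lemma Approx_ridge c (g : R -> R) (L delta : R) (u : nat -> R) :
  Assumption1 sigma c -> 0 < delta ->
  (forall x y, Rabs (g x - g y) <= L * Rabs (x - y)) ->
  (exists k, forall x, (x < -1 \/ 1 < x) -> g x = k) ->
  Approx (fun x => g (dotR d u x)) (c * L / delta) delta.
Proof.
  intros [_ Hc] Hd HL Hk.
  destruct (Hc g L 1 delta ltac:(lra) Hd HL Hk) as (w & a & al & be & ga & Hw & Ha).
  exists w, al, (fun i => - ga i), (fun i k => be i * u k), a.
  split; [rewrite Rmult_1_r in Hw; exact Hw|].
  intros x _; unfold Net; rewrite <- Rabs_Ropp.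
  eapply Rle_trans; [|apply (Ha (dotR d u x))]; right; f_equal.
  enough (E : forall i, dotR d (fun k => be i * u k) x + - ga i = be i * dotR d u x - ga i)
    by (rewrite (sumR_ext w _ (fun i => al i * sigma (be i * dotR d u x - ga i)))
          by (intros; rewrite E; reflexivity); ring).
  intros i; unfold dotR; rewrite <- sumR_scal; unfold Rminus; f_equal.
  apply sumR_ext; intros; ring.
Qed.

End Networks.

(** * Polarization: a product of [N] numbers from iterated differences of [z^N] *)

Fixpoint DegLt (n : nat) (h : R -> R) : Prop :=
  match n with
  | O => forall z, h z = 0
  | S n' => exists c g, DegLt n' g /\ forall z, h z = c * z ^ n' + g z
  end.

Lemma DegLt_ext n h1 h2 : (forall z, h1 z = h2 z) -> DegLt n h1 -> DegLt n h2.
Proof.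
  destruct n; simpl; intros E H.
  - intros z; rewrite <- E; auto.
  - destruct H as (c & g & Hg & Hz); exists c, g; split; auto.
    intros z; rewrite <- E; auto.
Qed.

Lemma DegLt_lin n f g a b :
  DegLt n f -> DegLt n g -> DegLt n (fun z => a * f z + b * g z).
Proof.
  revert f g; induction n as [|n IH]; simpl; intros f g Hf Hg.
  - intros z; rewrite Hf, Hg; ring.
  - destruct Hf as (c1 & g1 & H1 & E1), Hg as (c2 & g2 & H2 & E2).
    exists (a * c1 + b * c2), (fun z => a * g1 z + b * g2 z); split; [auto|].
    intros z; rewrite E1, E2; ring.
Qed.

Lemma DegLt_zero n : DegLt n (fun _ => 0).
Proof. induction n; simpl; auto. exists 0, (fun _ => 0); split; auto; intros; ring. Qed.

Lemma DegLt_S n f : DegLt n f -> DegLt (S n) f.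
Proof. intros H; exists 0, f; split; auto; intros; ring. Qed.

Lemma DegLt_monom n c : DegLt (S n) (fun z => c * z ^ n).
Proof. exists c, (fun _ => 0); split; [apply DegLt_zero|intros; ring]. Qed.

Lemma DegLt_mulz n f : DegLt n f -> DegLt (S n) (fun z => z * f z).
Proof.
  revert f; induction n as [|n IH]; intros f H.
  - exists 0, (fun _ => 0); split; [apply DegLt_zero|].
    intros z; simpl in H; rewrite H; ring.
  - destruct H as (c & g & Hg & E); exists c, (fun z => z * g z); split; [auto|].
    intros z; rewrite E; simpl; ring.
Qed.

Lemma shift_pow y n :
  DegLt n (fun z => (z + y) ^ S n - z ^ S n - INR (S n) * y * z ^ n).
Proof.
  induction n as [|n IH]; [simpl; intros; ring|].
  set (r := fun z => (z + y) ^ S n - z ^ S n - INR (S n) * y * z ^ n) in IH.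
  apply (DegLt_ext _ (fun z => 1 * (INR (S n) * y * y * z ^ n) + 1 * (z * r z + y * r z))).
  - intros z; unfold r; rewrite !S_INR; simpl; ring.
  - apply DegLt_lin; [apply DegLt_monom|].
    apply (DegLt_ext _ (fun z => 1 * (z * r z) + y * r z)); [intros; ring|].
    apply DegLt_lin; [apply DegLt_mulz|apply DegLt_S]; exact IH.
Qed.

Definition sym_diff (y : R) (h : R -> R) : R -> R := fun z => h (z + y) - h (z - y).

Lemma sym_diff_pow y n :
  DegLt n (fun z => sym_diff y (fun w => w ^ S n) z - 2 * INR (S n) * y * z ^ n).
Proof.
  apply (DegLt_ext _ (fun z => 1 * ((z + y) ^ S n - z ^ S n - INR (S n) * y * z ^ n)
                         + (-1) * ((z + - y) ^ S n - z ^ S n - INR (S n) * (- y) * z ^ n))).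
  - intros z; unfold sym_diff; replace (z - y) with (z + - y) by ring; ring.
  - apply DegLt_lin; apply shift_pow.
Qed.

Lemma sym_diff_deg y n h : DegLt (S n) h -> DegLt n (sym_diff y h).
Proof.
  revert h; induction n as [|n IH]; intros h (c & g & Hg & E).
  - simpl in *; intros z; unfold sym_diff; rewrite !E, !Hg; ring.
  - set (r := fun z => sym_diff y (fun w => w ^ S n) z - 2 * INR (S n) * y * z ^ n).
    apply (DegLt_ext _ (fun z => c * (2 * INR (S n) * y * z ^ n + r z)
                                 + 1 * sym_diff y g z)).
    + intros z; unfold r, sym_diff; rewrite !E; ring.
    + apply DegLt_lin; [|apply DegLt_S, IH, Hg].
      apply (DegLt_ext _ (fun z => 1 * (2 * INR (S n) * y * z ^ n) + 1 * r z));
        [intros; ring|].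
      apply DegLt_lin; [apply DegLt_monom|apply DegLt_S, sym_diff_pow].
Qed.

Fixpoint iter_diff (ys : list R) (h : R -> R) (z : R) : R :=
  match ys with
  | nil => h z
  | y :: ys' => iter_diff ys' h (z + y) - iter_diff ys' h (z - y)
  end.

Lemma iter_diff_ext ys h1 h2 :
  (forall z, h1 z = h2 z) -> forall z, iter_diff ys h1 z = iter_diff ys h2 z.
Proof. intros E; induction ys; simpl; intros; auto. rewrite !IHys; auto. Qed.

Lemma iter_diff_lin ys h1 h2 a b z :
  iter_diff ys (fun w => a * h1 w + b * h2 w) z
  = a * iter_diff ys h1 z + b * iter_diff ys h2 z.
Proof. revert z; induction ys; simpl; intros; auto. rewrite !IHys; ring. Qed.

Lemma iter_diff_cons ys y h z :
  iter_diff ys (sym_diff y h) z = iter_diff (y :: ys) h z.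
Proof.
  revert z; induction ys as [|a ys IH]; intros z; simpl; [reflexivity|].
  rewrite !IH; simpl.
  replace (z + a + y) with (z + y + a) by ring; replace (z + a - y) with (z - y + a) by ring.
  replace (z - a + y) with (z + y - a) by ring; replace (z - a - y) with (z - y - a) by ring.
  ring.
Qed.

Lemma iter_diff_vanish ys h :
  DegLt (length ys) h -> forall z, iter_diff ys h z = 0.
Proof.
  revert h; induction ys as [|y ys IH]; intros h H z; [exact (H z)|].
  rewrite <- iter_diff_cons; apply IH, sym_diff_deg, H.
Qed.

Definition prodR (ys : list R) : R := fold_right Rmult 1 ys.

Lemma iter_diff_top ys z :
  iter_diff ys (fun w => w ^ length ys) z
  = 2 ^ length ys * INR (fact (length ys)) * prodR ys.
Proof.
  revert z; induction ys as [|y ys IH]; intros z; [simpl; ring|].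
  change (length (y :: ys)) with (S (length ys)).
  rewrite <- iter_diff_cons; set (n := length ys).
  rewrite (iter_diff_ext ys _
    (fun w => (2 * INR (S n) * y) * w ^ n
              + 1 * (sym_diff y (fun w => w ^ S n) w - 2 * INR (S n) * y * w ^ n)))
    by (intros; ring).
  rewrite iter_diff_lin, IH, (iter_diff_vanish ys) by apply sym_diff_pow.
  unfold n; simpl prodR; rewrite fact_simpl, mult_INR; simpl pow; ring.
Qed.

Definition basis_vec (k : nat) (a : R) : nat -> R := fun j => if Nat.eqb j k then a else 0.

Section Vectors.
Variable d : nat.

Definition sqnorm (x : nat -> R) : R := sumR d (fun j => x j ^ 2).

Lemma sqnorm_nonneg x : 0 <= sqnorm x.
Proof. apply sumR_nonneg; intros; apply pow2_ge_0. Qed.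

Lemma dot_add u v x : dotR d (fun k => u k + v k) x = dotR d u x + dotR d v x.
Proof. unfold dotR; rewrite <- sumR_add; apply sumR_ext; intros; ring. Qed.

Lemma dot_sub u v x : dotR d (fun k => u k - v k) x = dotR d u x - dotR d v x.
Proof.
  unfold dotR.
  replace (sumR d (fun k => u k * x k) - sumR d (fun k => v k * x k))
    with (sumR d (fun k => u k * x k) + (-1) * sumR d (fun k => v k * x k)) by ring.
  rewrite <- sumR_scal, <- sumR_add; apply sumR_ext; intros; ring.
Qed.

Lemma dot_zero x : dotR d (fun _ => 0) x = 0.
Proof.
  unfold dotR; rewrite (sumR_ext d _ (fun _ => 0)), sumR_const by (intros; ring); ring.
Qed.

Lemma dot_basis k a x : (k < d)%nat -> dotR d (basis_vec k a) x = a * x k.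
Proof.
  intros Hk; unfold dotR, basis_vec.
  rewrite (sumR_ext d _ (fun j => if Nat.eqb j k then a * x j else 0));
    [apply sumR_single; exact Hk|].
  intros i _; destruct (Nat.eqb i k); ring.
Qed.

Lemma coord_le_norm x k : (k < d)%nat -> Rabs (x k) <= normR d x.
Proof.
  intros Hk; unfold normR.
  rewrite <- (sqrt_pow2 (Rabs (x k))) by apply Rabs_pos; apply sqrt_le_1_alt.
  rewrite pow2_abs.
  replace (x k ^ 2) with (sumR d (fun j => if Nat.eqb j k then x j ^ 2 else 0))
    by exact (sumR_single d k (fun j => x j ^ 2) Hk).
  apply sumR_le; intros i _; destruct (Nat.eqb i k); [lra|apply pow2_ge_0].
Qed.

Definition sum_abs_dot (us : list (nat -> R)) (x : nat -> R) : R :=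
  fold_right (fun u s => Rabs (dotR d u x) + s) 0 us.

End Vectors.

Definition clamp (z : R) : R := Rmax (-1) (Rmin 1 z).

Lemma clamp_lip a b : Rabs (clamp a - clamp b) <= Rabs (a - b).
Proof.
  unfold clamp, Rmax, Rmin; repeat destruct Rle_dec; unfold Rabs;
    repeat destruct Rcase_abs; lra.
Qed.

Lemma clamp_bound a : Rabs (clamp a) <= 1.
Proof. unfold clamp, Rmax, Rmin; repeat destruct Rle_dec; unfold Rabs; repeat destruct Rcase_abs; lra. Qed.

Lemma clamp_id a : Rabs a <= 1 -> clamp a = a.
Proof.
  intros H; unfold clamp, Rmax, Rmin; repeat destruct Rle_dec;
    unfold Rabs in H; destruct Rcase_abs in H; lra.
Qed.

Lemma pow_lip N a b :
  Rabs a <= 1 -> Rabs b <= 1 -> Rabs (a ^ N - b ^ N) <= INR N * Rabs (a - b).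
Proof.
  intros Ha Hb; induction N as [|N IH].
  - simpl; replace (1 - 1) with 0 by ring; rewrite Rabs_R0; lra.
  - replace (a ^ S N - b ^ S N) with (a * (a ^ N - b ^ N) + (a - b) * b ^ N) by (simpl; ring).
    eapply Rle_trans; [apply Rabs_triang|]; rewrite !Rabs_mult, S_INR, <- RPow_abs.
    assert (Rabs b ^ N <= 1) by (rewrite <- (pow1 N); apply pow_incr; split; auto; apply Rabs_pos).
    pose proof (Rabs_pos (a - b)); pose proof (Rabs_pos (a ^ N - b ^ N)).
    apply Rle_trans with (1 * (INR N * Rabs (a - b)) + Rabs (a - b) * 1); [|lra].
    apply Rplus_le_compat; [apply Rmult_le_compat; auto; apply Rabs_pos|].
    apply Rmult_le_compat_l; auto.
Qed.

(** * Networks for the powers [|x|^(2m)] *)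

Section NormPowers.
Variable d : nat.
Variable sigma : R -> R.
Variable c : R.
Hypothesis Hc : Assumption1 sigma c.
Variable delta : R.
Hypothesis Hdelta : 0 < delta.

(** An even power of a linear form bounded by 1 on the ball is a ridge
    function of the [2m]-Lipschitz map [z |-> clamp(z)^(2m)], which equals 1
    outside [[-1,1]]. *)
Lemma Approx_linpow m u :
  (forall x, normR d x <= 1 -> Rabs (dotR d u x) <= 1) ->
  Approx d sigma (fun x => dotR d u x ^ (2 * m)) (c * INR (2 * m) / delta) delta.
Proof.
  intros Hu.
  assert (Hclamp : Approx d sigma (fun x => clamp (dotR d u x) ^ (2 * m))
                     (c * INR (2 * m) / delta) delta).
  { apply (Approx_ridge d sigma c (fun z => clamp z ^ (2 * m))); auto.
    - intros a b; eapply Rle_trans; [apply pow_lip; apply clamp_bound|].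
      apply Rmult_le_compat_l; [apply pos_INR|apply clamp_lip].
    - exists 1; intros z Hz; unfold clamp, Rmax, Rmin.
      repeat destruct Rle_dec; try lra; try rewrite pow_1_even; try apply pow1; reflexivity. }
  apply (Approx_mono _ _ _ _ _ _ _ _ Hclamp); [lra|lra|].
  intros x Hx; rewrite clamp_id; auto.
Qed.

Lemma Approx_iter_diff m us u0 :
  (forall x, normR d x <= 1 -> Rabs (dotR d u0 x) + sum_abs_dot d us x <= 1) ->
  Approx d sigma
    (fun x => iter_diff (map (fun u => dotR d u x) us) (fun z => z ^ (2 * m)) (dotR d u0 x))
    (2 ^ length us * (c * INR (2 * m) / delta)) (2 ^ length us * delta).
Proof.
  revert u0; induction us as [|u us IH]; intros u0 H.
  - assert (Hu0 : forall x, normR d x <= 1 -> Rabs (dotR d u0 x) <= 1)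
      by (intros x Hx; specialize (H x Hx); simpl in H; lra).
    apply (Approx_mono _ _ _ _ _ _ _ _ (Approx_linpow m u0 Hu0)); simpl;
      [lra|lra|reflexivity].
  - assert (Hplus : forall x, normR d x <= 1 ->
              Rabs (dotR d (fun k => u0 k + u k) x) + sum_abs_dot d us x <= 1).
    { intros x Hx; specialize (H x Hx); simpl in H; rewrite dot_add.
      pose proof (Rabs_triang (dotR d u0 x) (dotR d u x)); lra. }
    assert (Hminus : forall x, normR d x <= 1 ->
              Rabs (dotR d (fun k => u0 k - u k) x) + sum_abs_dot d us x <= 1).
    { intros x Hx; specialize (H x Hx); simpl in H; rewrite dot_sub; unfold Rminus.
      pose proof (Rabs_triang (dotR d u0 x) (- dotR d u x)); rewrite Rabs_Ropp in *; lra. }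
    apply (Approx_mono _ _ _ _ _ _ _ _ (Approx_sub _ _ _ _ _ _ _ _ (IH _ Hplus) (IH _ Hminus)));
      simpl; [lra|lra|].
    intros x _; rewrite dot_add, dot_sub; reflexivity.
Qed.

(** By polarization, a product of [2m] linear forms with [sum |u.x| <= 1] is
    approximable; dividing by [2^(2m) (2m)!] brings the error back to [delta]. *)
Lemma Approx_prod m ls :
  length ls = (2 * m)%nat ->
  (forall x, normR d x <= 1 -> sum_abs_dot d ls x <= 1) ->
  Approx d sigma (fun x => prodR (map (fun u => dotR d u x) ls))
    (2 ^ (2 * m) * (c * INR (2 * m) / delta)) delta.
Proof.
  intros Hl H; set (K := 2 ^ (2 * m) * INR (fact (2 * m))).
  assert (HK : 1 <= INR (fact (2 * m))) by (apply (le_INR 1), lt_O_fact).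
  assert (H2 : 1 <= 2 ^ (2 * m)) by (apply pow_R1_Rle; lra).
  assert (A := Approx_iter_diff m ls (fun _ => 0)).
  rewrite Hl in A; apply (Approx_scal _ _ _ _ _ (/ K)) in A;
    [|intros x Hx; rewrite dot_zero, Rabs_R0, Rplus_0_l; auto].
  apply (Approx_mono _ _ _ _ _ _ _ _ A); [lra| |].
  - rewrite Rabs_pos_eq by (unfold K; left; apply Rinv_0_lt_compat; nra).
    unfold K; rewrite Rinv_mult, Rmult_assoc, <- (Rmult_assoc (/ INR _)), (Rmult_comm (/ INR _)),
      Rmult_assoc, <- Rmult_assoc, Rinv_l, Rmult_1_l by lra.
    rewrite <- Rmult_1_l; apply Rmult_le_compat_r; [lra|].
    rewrite <- Rinv_1; apply Rinv_le_contravar; lra.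
  - intros x _; rewrite dot_zero.
    pose proof (iter_diff_top (map (fun u => dotR d u x) ls) 0) as T.
    rewrite length_map, Hl in T; rewrite T; unfold K; field; split; lra.
Qed.

(** [norm_expansion a k ls x] expands [prod_(u in ls) (u.x) * (a^2 |x|^2)^k]
    as a sum of [d^k] products of linear forms, writing
    [a^2 |x|^2 = sum_j (a e_j . x)(a e_j . x)]. *)
Fixpoint norm_expansion (a : R) (k : nat) (ls : list (nat -> R)) (x : nat -> R) : R :=
  match k with
  | O => prodR (map (fun u => dotR d u x) ls)
  | S k' => sumR d (fun j => norm_expansion a k' (basis_vec j a :: basis_vec j a :: ls) x)
  end.

Lemma norm_expansion_eq a k ls x :
  norm_expansion a k ls x = prodR (map (fun u => dotR d u x) ls) * (a ^ 2 * sqnorm d x) ^ k.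
Proof.
  revert ls; induction k as [|k IH]; intros ls; simpl norm_expansion; [simpl; ring|].
  rewrite (sumR_ext d _ (fun j => (prodR (map (fun u => dotR d u x) ls)
                                    * (a ^ 2 * sqnorm d x) ^ k * a ^ 2) * x j ^ 2)).
  - rewrite sumR_scal; unfold sqnorm; simpl; ring.
  - intros j Hj; rewrite IH; simpl; rewrite dot_basis by exact Hj; ring.
Qed.

(** Each of the [d^k] products has [length ls + 2k] factors, and
    [|a e_j . x| <= a] on the ball. *)
Lemma Approx_norm_expansion m a k ls :
  (length ls + 2 * k = 2 * m)%nat -> 0 <= a ->
  (forall x, normR d x <= 1 -> sum_abs_dot d ls x + 2 * INR k * a <= 1) ->
  Approx d sigma (norm_expansion a k ls)
    (INR d ^ k * (2 ^ (2 * m) * (c * INR (2 * m) / delta))) (INR d ^ k * delta).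
Proof.
  revert ls; induction k as [|k IH]; intros ls Hl Ha H.
  - assert (Hls : forall x, normR d x <= 1 -> sum_abs_dot d ls x <= 1)
      by (intros x Hx; specialize (H x Hx); simpl in H; lra).
    apply (Approx_mono _ _ _ _ _ _ _ _ (Approx_prod m ls ltac:(lia) Hls));
      simpl; [lra|lra|reflexivity].
  - assert (Hterm : forall j, (j < d)%nat ->
              Approx d sigma (norm_expansion a k (basis_vec j a :: basis_vec j a :: ls))
                (INR d ^ k * (2 ^ (2 * m) * (c * INR (2 * m) / delta))) (INR d ^ k * delta)).
    { intros j Hj; apply IH; [simpl; lia|exact Ha|].
      intros x Hx; specialize (H x Hx); simpl; rewrite dot_basis by exact Hj.
      rewrite S_INR in H; rewrite Rabs_mult, (Rabs_pos_eq a) by exact Ha.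
      pose proof (coord_le_norm d x j Hj).
      assert (a * Rabs (x j) <= a) by (rewrite <- (Rmult_1_r a) at 2; apply Rmult_le_compat_l; lra).
      lra. }
    apply (Approx_mono _ _ _ _ _ _ _ _ (Approx_sumR _ _ _ _ _ _ Hterm)); simpl;
      [lra|lra|reflexivity].
Qed.

(** [|x|^(2m) = (2m+1)^(2m) * norm_expansion (1/(2m+1)) m nil x]. *)
Lemma Approx_sqnorm_pow m :
  Approx d sigma (fun x => sqnorm d x ^ m)
    (INR d ^ m * (2 ^ (2 * m) * (c * INR (2 * m) / delta)))
    (INR (S (2 * m)) ^ (2 * m) * (INR d ^ m * delta)).
Proof.
  set (a := / INR (S (2 * m))).
  assert (Pa : 0 < INR (S (2 * m))) by (apply lt_0_INR; lia).
  assert (Ha : 2 * INR m * a <= 1).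
  { unfold a; rewrite S_INR, mult_INR; simpl INR.
    apply (Rmult_le_reg_r (2 * INR m + 1)); [pose proof (pos_INR m); lra|].
    rewrite Rmult_assoc, Rinv_l by (pose proof (pos_INR m); lra); lra. }
  assert (A := Approx_norm_expansion m a m nil eq_refl ltac:(unfold a; left; apply Rinv_0_lt_compat, Pa)
                 ltac:(intros; simpl; lra)).
  apply (Approx_scal _ _ _ _ _ (INR (S (2 * m)) ^ (2 * m))) in A.
  rewrite Rabs_pos_eq in A by (apply pow_le; lra).
  apply (Approx_mono _ _ _ _ _ _ _ _ A); [lra|lra|].
  intros x _; rewrite norm_expansion_eq; simpl prodR.
  rewrite Rpow_mult_distr, <- pow_mult.
  replace (INR (S (2 * m)) ^ (2 * m) * (1 * (a ^ (2 * m) * sqnorm d x ^ m)))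
    with ((INR (S (2 * m)) * a) ^ (2 * m) * sqnorm d x ^ m)
    by (rewrite Rpow_mult_distr; ring).
  unfold a; rewrite Rinv_r, pow1 by lra; ring.
Qed.

End NormPowers.

(** * Bernstein approximation of 1/2-Hölder functions on [[0,1]] *)

Definition bern (n k : nat) (t : R) : R := C n k * t ^ k * (1 - t) ^ (n - k).

Lemma bern_sum n t : sumR (S n) (fun k => bern n k t) = 1.
Proof.
  unfold bern; rewrite <- sum_f_R0_sumR, <- binomial.
  replace (t + (1 - t)) with 1 by ring; apply pow1.
Qed.

Lemma binom_nonneg n k : 0 <= C n k.
Proof.
  unfold C, Rdiv; apply Rmult_le_pos; [apply pos_INR|].
  left; apply Rinv_0_lt_compat, Rmult_lt_0_compat; apply lt_0_INR, lt_O_fact.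
Qed.

Lemma bern_nonneg n k t : 0 <= t <= 1 -> 0 <= bern n k t.
Proof.
  intros Ht; unfold bern; apply Rmult_le_pos; [apply Rmult_le_pos|];
    [apply binom_nonneg|apply pow_le; lra|apply pow_le; lra].
Qed.

Lemma binom_le_pow2 n k : (k <= n)%nat -> C n k <= 2 ^ n.
Proof.
  intros Hk; replace 2 with (1 + 1) by ring; rewrite binomial, sum_f_R0_sumR.
  replace (C n k) with (sumR (S n) (fun j => if Nat.eqb j k then C n j else 0))
    by (apply sumR_single; lia).
  apply sumR_le; intros i _; rewrite !pow1, Rmult_1_r, Rmult_1_r.
  destruct (Nat.eqb i k); [lra|apply binom_nonneg].
Qed.

Lemma bern_expand n k t : (k <= n)%nat ->
  bern n k t = sumR (S (n - k)) (fun i => (C n k * C (n - k) i * (-1) ^ i) * t ^ (k + i)).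
Proof.
  intros Hk; unfold bern; replace (1 - t) with (- t + 1) by ring.
  rewrite binomial, sum_f_R0_sumR, Rmult_assoc, <- !sumR_scal; apply sumR_ext; intros i _.
  rewrite pow1, pow_add; replace (- t) with (-1 * t) by ring; rewrite Rpow_mult_distr; ring.
Qed.

Lemma binom_absorb m j : INR (S j) * C (S m) (S j) = INR (S m) * C m j.
Proof.
  unfold C; simpl (S m - S j)%nat; rewrite !fact_simpl, !mult_INR.
  field; repeat split; try apply INR_fact_neq_0; apply not_0_INR; lia.
Qed.

Lemma bern_shift m g t :
  sumR (S (S m)) (fun k => g k * INR k * bern (S m) k t)
  = INR (S m) * t * sumR (S m) (fun j => g (S j) * bern m j t).
Proof.
  rewrite sumR_shift; simpl INR at 1; rewrite Rmult_0_r, Rmult_0_l, Rplus_0_l, <- sumR_scal.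
  apply sumR_ext; intros j _; unfold bern; simpl (S m - S j)%nat.
  replace (g (S j) * INR (S j) * (C (S m) (S j) * t ^ S j * (1 - t) ^ (m - j)))
    with (g (S j) * (INR (S j) * C (S m) (S j)) * t ^ S j * (1 - t) ^ (m - j)) by ring.
  rewrite binom_absorb; simpl; ring.
Qed.

Lemma bern_mean n t : sumR (S n) (fun k => INR k * bern n k t) = INR n * t.
Proof.
  destruct n as [|m]; [simpl; ring|].
  rewrite (sumR_ext _ _ (fun k => 1 * INR k * bern (S m) k t)) by (intros; ring).
  rewrite (bern_shift m (fun _ => 1)), (sumR_ext _ _ (fun j => bern m j t)) by (intros; ring).
  rewrite bern_sum; ring.
Qed.

Lemma bern_second_moment m t :
  sumR (S (S m)) (fun k => INR k * INR k * bern (S m) k t) = INR (S m) * t * (INR m * t + 1).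
Proof.
  rewrite (bern_shift m INR); f_equal.
  rewrite (sumR_ext _ _ (fun j => INR j * bern m j t + bern m j t))
    by (intros; rewrite S_INR; ring).
  rewrite sumR_add, bern_mean, bern_sum; ring.
Qed.

Lemma bern_variance m t :
  sumR (S (S m)) (fun k => bern (S m) k t * (INR k / INR (S m) - t) ^ 2)
  = t * (1 - t) / INR (S m).
Proof.
  set (n := INR (S m)); assert (Hn : 0 < n) by (apply lt_0_INR; lia).
  rewrite (sumR_ext _ _ (fun k => (/ n ^ 2 * (INR k * INR k * bern (S m) k t)
                                   + (- 2 * t / n) * (INR k * bern (S m) k t))
                                  + t ^ 2 * bern (S m) k t)) by (intros; field; lra).
  rewrite !sumR_add, !sumR_scal, bern_second_moment, bern_mean, bern_sum; fold n.
  replace (INR m) with (n - 1) by (unfold n; rewrite S_INR; ring); field; lra.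
Qed.

(** Splitting [sqrt u] according to whether [sqrt u <= eta] or not. *)
Lemma sqrt_le_split u eta : 0 <= u -> 0 < eta -> sqrt u <= eta + u ^ 2 / eta ^ 3.
Proof.
  intros Hu He.
  assert (0 <= u ^ 2 / eta ^ 3)
    by (apply Rmult_le_pos; [apply pow_le; auto|left; apply Rinv_0_lt_compat, pow_lt; auto]).
  destruct (Rle_lt_dec (sqrt u) eta) as [|Hlt]; [lra|].
  set (s := sqrt u) in *; assert (Hs : s * s = u) by (apply sqrt_sqrt; auto).
  enough (s <= u ^ 2 / eta ^ 3) by lra.
  apply (Rmult_le_reg_r (eta ^ 3)); [apply pow_lt; auto|].
  unfold Rdiv; rewrite Rmult_assoc, Rinv_l, Rmult_1_r by (apply pow_nonzero; lra).
  rewrite <- Hs; simpl.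
  assert (eta * eta * eta <= s * s * s) by (apply Rmult_le_compat; try nra).
  nra.
Qed.

Lemma grid_in_unit n k : (0 < n)%nat -> (k <= n)%nat -> 0 <= INR k / INR n <= 1.
Proof.
  intros Hn Hk; assert (0 < INR n) by (apply lt_0_INR; exact Hn).
  split; [apply Rmult_le_pos; [apply pos_INR|left; apply Rinv_0_lt_compat; auto]|].
  apply (Rmult_le_reg_r (INR n)); auto; unfold Rdiv.
  rewrite Rmult_assoc, Rinv_l, Rmult_1_l, Rmult_1_r by lra; apply le_INR; exact Hk.
Qed.

(** Bernstein's theorem for a 1/2-Hölder [psi]: by [sqrt_le_split], the error
    is at most [eta] plus [eta^-3] times the variance [t(1-t)/n <= 1/n]. *)
Lemma bernstein_holder (psi : R -> R) m t eta :
  0 <= t <= 1 -> 0 < eta ->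
  (forall a b, 0 <= a <= 1 -> 0 <= b <= 1 -> Rabs (psi a - psi b) <= sqrt (Rabs (a - b))) ->
  Rabs (sumR (S (S m)) (fun k => psi (INR k / INR (S m)) * bern (S m) k t) - psi t)
  <= eta + 1 / (INR (S m) * eta ^ 3).
Proof.
  intros Ht He Hpsi; set (n := S m).
  assert (Hn : 0 < INR n) by (apply lt_0_INR; unfold n; lia).
  assert (He3 : 0 < eta ^ 3) by (apply pow_lt; auto).
  replace (psi t) with (sumR (S n) (fun k => psi t * bern n k t)) by (rewrite sumR_scal, bern_sum; ring).
  replace (sumR (S n) (fun k => psi (INR k / INR n) * bern n k t)
           - sumR (S n) (fun k => psi t * bern n k t))
    with (sumR (S n) (fun k => bern n k t * (psi (INR k / INR n) - psi t))).
  2: { replace (sumR (S n) (fun k => psi (INR k / INR n) * bern n k t)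
                - sumR (S n) (fun k => psi t * bern n k t))
         with (sumR (S n) (fun k => psi (INR k / INR n) * bern n k t)
               + (-1) * sumR (S n) (fun k => psi t * bern n k t)) by ring.
       rewrite <- sumR_scal, <- sumR_add; apply sumR_ext; intros; ring. }
  eapply Rle_trans; [apply sumR_abs|].
  eapply Rle_trans;
    [apply (sumR_le _ _ (fun k => eta * bern n k t
                                  + / eta ^ 3 * (bern n k t * (INR k / INR n - t) ^ 2)))|].
  - intros k Hk; pose proof (bern_nonneg n k t Ht).
    rewrite Rabs_mult, (Rabs_pos_eq (bern n k t)) by auto.
    pose proof (Hpsi _ _ (grid_in_unit n k ltac:(lia) ltac:(lia)) Ht).
    pose proof (sqrt_le_split (Rabs (INR k / INR n - t)) eta (Rabs_pos _) He).
    rewrite <- (pow2_abs (INR k / INR n - t)).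
    apply Rle_trans with (bern n k t * (eta + Rabs (INR k / INR n - t) ^ 2 / eta ^ 3));
      [apply Rmult_le_compat_l; lra|right; unfold Rdiv; ring].
  - rewrite sumR_add, !sumR_scal, bern_sum; unfold n; rewrite bern_variance; fold n.
    assert (t * (1 - t) / INR n <= 1 / INR n)
      by (apply Rmult_le_compat_r; [left; apply Rinv_0_lt_compat; auto|nra]).
    replace (1 / (INR n * eta ^ 3)) with (/ eta ^ 3 * (1 / INR n)) by (field; lra).
    apply Rplus_le_compat; [lra|apply Rmult_le_compat_l; [left; apply Rinv_0_lt_compat|]; lra].
Qed.

Section BernsteinNetworks.
Variable d : nat.
Hypothesis Hd : (1 <= d)%nat.
Variable sigma : R -> R.
Variable c : R.
Hypothesis Hc : Assumption1 sigma c.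

(** Width and error budget for one monomial [coef * |x|^(2j)], [j <= n],
    built with ridge error [de]. *)
Definition mono_width (n : nat) (de : R) : R :=
  INR d ^ n * (2 ^ (2 * n) * (c * INR (2 * n) / de)).
Definition mono_error (n : nat) (de : R) : R :=
  4 ^ n * (INR (S (2 * n)) ^ (2 * n) * (INR d ^ n * de)).

Lemma mono_width_nonneg n de : 0 < de -> 0 <= mono_width n de.
Proof.
  intros Hde; pose proof (proj1 Hc) as Hc1; unfold mono_width.
  apply Rmult_le_pos; [apply pow_le, pos_INR|apply Rmult_le_pos; [apply pow_le; lra|]].
  apply Rmult_le_pos; [apply Rmult_le_pos; [lra|apply pos_INR]|].
  left; apply Rinv_0_lt_compat; exact Hde.
Qed.

Lemma mono_error_nonneg n de : 0 < de -> 0 <= mono_error n de.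
Proof.
  intros Hde; unfold mono_error.
  repeat apply Rmult_le_pos; try (apply pow_le; try apply pos_INR); lra.
Qed.

(** Each monomial [coef * |x|^(2j)] with [j <= n] and [|coef| <= 4^n] fits
    the degree-[n] budget: the budgets of [Approx_sqnorm_pow] grow with [j]. *)
Lemma Approx_monomial n j de coef :
  0 < de -> (j <= n)%nat -> Rabs coef <= 4 ^ n ->
  Approx d sigma (fun x => coef * sqnorm d x ^ j) (mono_width n de) (mono_error n de).
Proof.
  intros Hde Hj Hcoef; pose proof (proj1 Hc) as Hc1.
  assert (Hd1 : 1 <= INR d) by (apply (le_INR 1); exact Hd).
  assert (Hpow : forall a k l, 1 <= a -> (k <= l)%nat -> 0 <= a ^ k <= a ^ l)
    by (intros; split; [apply pow_le; lra|apply Rle_pow; auto]).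
  apply (Approx_mono _ _ _ _ _ _ _ _ (Approx_scal _ _ _ _ _ coef (Approx_sqnorm_pow d sigma c Hc de Hde j)));
    [unfold mono_width| |reflexivity].
  - assert (HN : INR (2 * j) <= INR (2 * n)) by (apply le_INR; lia).
    assert (0 <= c * INR (2 * j) / de <= c * INR (2 * n) / de).
    { unfold Rdiv; split.
      - apply Rmult_le_pos; [apply Rmult_le_pos; [lra|apply pos_INR]|left; apply Rinv_0_lt_compat; lra].
      - apply Rmult_le_compat_r; [left; apply Rinv_0_lt_compat; lra|apply Rmult_le_compat_l; lra]. }
    destruct (Hpow (INR d) j n Hd1 Hj).
    destruct (Hpow 2 (2 * j)%nat (2 * n)%nat ltac:(lra) ltac:(lia)).
    apply Rmult_le_compat; try nra; apply Rmult_le_compat; lra.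
  - unfold mono_error.
    assert (H2n : INR (S (2 * j)) ^ (2 * j) <= INR (S (2 * n)) ^ (2 * n)).
    { apply Rle_trans with (INR (S (2 * j)) ^ (2 * n));
        [apply Hpow; [apply (le_INR 1)|]; lia|].
      apply pow_incr; split; [apply pos_INR|apply le_INR; lia]. }
    destruct (Hpow (INR d) j n Hd1 Hj).
    assert (0 <= INR (S (2 * j)) ^ (2 * j)) by (apply pow_le, pos_INR).
    apply Rmult_le_compat; [apply Rabs_pos|apply Rmult_le_pos; [lra|apply Rmult_le_pos; lra]|exact Hcoef|].
    apply Rmult_le_compat; try lra; try (apply Rmult_le_pos; lra).
    apply Rmult_le_compat_r; lra.
Qed.

(** The degree-[n] Bernstein polynomial of [psi], evaluated at [|x|^2], is a
    sum of [(n+1)^2] monomials with coefficients at most [4^n] provided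
    [|psi| <= 1] on the grid [k/n]. *)
Lemma Approx_bernstein n (psi : R -> R) de :
  0 < de -> (forall k, (k <= n)%nat -> Rabs (psi (INR k / INR n)) <= 1) ->
  Approx d sigma (fun x => sumR (S n) (fun k => psi (INR k / INR n) * bern n k (sqnorm d x)))
    (INR (S n) * (INR (S n) * mono_width n de)) (INR (S n) * (INR (S n) * mono_error n de)).
Proof.
  intros Hde Hpsi.
  set (coef k i := psi (INR k / INR n) * (C n k * C (n - k) i * (-1) ^ i)).
  assert (Hcoef : forall k i, (k <= n)%nat -> (i <= n - k)%nat -> Rabs (coef k i) <= 4 ^ n).
  { intros k i Hk Hi; unfold coef.
    rewrite !Rabs_mult, pow_1_abs, Rmult_1_r, (Rabs_pos_eq (C n k)), (Rabs_pos_eq (C (n - k) i))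
      by apply binom_nonneg.
    replace (4 ^ n) with (1 * (2 ^ n * 2 ^ n))
      by (replace 4 with (2 * 2) by ring; rewrite Rpow_mult_distr; ring).
    apply Rmult_le_compat; [apply Rabs_pos|apply Rmult_le_pos; apply binom_nonneg|auto|].
    apply Rmult_le_compat; try apply binom_nonneg; [apply binom_le_pow2; exact Hk|].
    apply Rle_trans with (2 ^ (n - k)); [apply binom_le_pow2; exact Hi|apply Rle_pow; lra || lia]. }
  assert (Hrow : forall k, (k < S n)%nat ->
            Approx d sigma (fun x => sumR (S (n - k)) (fun i => coef k i * sqnorm d x ^ (k + i)))
              (INR (S n) * mono_width n de) (INR (S n) * mono_error n de)).
  { intros k Hk.
    assert (Hterm : forall i, (i < S (n - k))%nat ->
              Approx d sigma (fun x => coef k i * sqnorm d x ^ (k + i))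
                (mono_width n de) (mono_error n de))
      by (intros i Hi; apply Approx_monomial; [exact Hde|lia|apply Hcoef; lia]).
    assert (Hlen : INR (S (n - k)) <= INR (S n)) by (apply le_INR; lia).
    apply (Approx_mono _ _ _ _ _ _ _ _ (Approx_sumR _ _ _ _ _ _ Hterm)); [| |reflexivity];
      apply Rmult_le_compat_r; auto using mono_width_nonneg, mono_error_nonneg. }
  apply (Approx_mono _ _ _ _ _ _ _ _ (Approx_sumR _ _ _ _ _ _ Hrow)); [lra|lra|].
  intros x _; apply sumR_ext; intros k Hk.
  rewrite bern_expand, <- sumR_scal by lia; apply sumR_ext; intros; unfold coef; ring.
Qed.

End BernsteinNetworks.

(** * Radial functions *)

Lemma sqrt_diff_le a b :
  0 <= a -> 0 <= b -> Rabs (sqrt a - sqrt b) <= sqrt (Rabs (a - b)).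
Proof.
  intros Ha Hb; rewrite <- (sqrt_pow2 (Rabs (sqrt a - sqrt b))) by apply Rabs_pos.
  apply sqrt_le_1_alt.
  pose proof (sqrt_sqrt a Ha) as Ea; pose proof (sqrt_sqrt b Hb) as Eb.
  pose proof (sqrt_pos a); pose proof (sqrt_pos b).
  set (p := sqrt a) in *; set (q := sqrt b) in *; rewrite <- Ea, <- Eb, pow2_abs.
  destruct (Rle_dec q p); [rewrite Rabs_pos_eq by nra|rewrite Rabs_left1 by nra]; nra.
Qed.

(** With [n >= 256 / eps^4], the second term of the bound of
    [bernstein_holder] at [eta = eps/4] is at most [eps/4], so that the
    Bernstein error is at most [eps/2]. *)
Lemma bernstein_degree_enough eps n :
  0 < eps -> (0 < n)%nat -> 256 / eps ^ 4 <= INR n -> 1 / (INR n * (eps / 4) ^ 3) <= eps / 4.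
Proof.
  intros He Hn Hn2; assert (0 < INR n) by (apply lt_0_INR; exact Hn).
  assert (0 < eps ^ 3) by (apply pow_lt; lra).
  assert (256 <= INR n * eps ^ 4).
  { apply (Rmult_le_reg_r (/ eps ^ 4)); [apply Rinv_0_lt_compat, pow_lt; lra|].
    rewrite Rmult_assoc, Rinv_r by (apply pow_nonzero; lra); lra. }
  replace (1 / (INR n * (eps / 4) ^ 3)) with (64 / (INR n * eps ^ 3)) by (field; lra).
  apply (Rmult_le_reg_r (INR n * eps ^ 3)); [nra|].
  unfold Rdiv; rewrite Rmult_assoc, Rinv_l by nra.
  replace (eps * / 4 * (INR n * eps ^ 3)) with (INR n * eps ^ 4 / 4) by (simpl; field); lra.
Qed.

Section Radial.
Variable d : nat.
Hypothesis Hd : (1 <= d)%nat.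
Variable sigma : R -> R.
Variable c : R.
Hypothesis Hc : Assumption1 sigma c.
Variable phi : R -> R.
Hypothesis Hphi : forall x y : nat -> R,
  Rabs (phi (normR d x) - phi (normR d y)) <= normR d (fun k => x k - y k).

Lemma normR_basis0 r : normR d (basis_vec 0 r) = Rabs r.
Proof.
  unfold normR; rewrite (sumR_ext d _ (fun k => if Nat.eqb k 0 then r ^ 2 else 0)).
  - rewrite (sumR_single d 0 (fun _ => r ^ 2)) by lia.
    rewrite <- pow2_abs; apply sqrt_pow2, Rabs_pos.
  - intros i _; unfold basis_vec; destruct (Nat.eqb i 0); ring.
Qed.

Definition profile (t : R) : R := phi (sqrt t) - phi 0.

(** Testing the Lipschitz hypothesis on multiples of [e_0] shows that the
    profile is 1/2-Hölder on [[0,1]]. *)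
Lemma profile_holder a b :
  0 <= a <= 1 -> 0 <= b <= 1 -> Rabs (profile a - profile b) <= sqrt (Rabs (a - b)).
Proof.
  intros Ha Hb; unfold profile.
  replace (phi (sqrt a) - phi 0 - (phi (sqrt b) - phi 0)) with (phi (sqrt a) - phi (sqrt b)) by ring.
  pose proof (Hphi (basis_vec 0 (sqrt a)) (basis_vec 0 (sqrt b))) as H.
  rewrite !normR_basis0, (Rabs_pos_eq (sqrt a)), (Rabs_pos_eq (sqrt b)) in H by apply sqrt_pos.
  replace (normR d (fun k => basis_vec 0 (sqrt a) k - basis_vec 0 (sqrt b) k))
    with (normR d (basis_vec 0 (sqrt a - sqrt b))) in H.
  - rewrite normR_basis0 in H; eapply Rle_trans; [exact H|apply sqrt_diff_le; lra].
  - unfold normR; f_equal; apply sumR_ext; intros i _; unfold basis_vec; destruct (Nat.eqb i 0); ring.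
Qed.

(** Since [profile 0 = 0], the profile is bounded by 1 on [[0,1]]. *)
Lemma profile_bound t : 0 <= t <= 1 -> Rabs (profile t) <= 1.
Proof.
  intros Ht; replace (profile t) with (profile t - profile 0) by (unfold profile; rewrite sqrt_0; ring).
  eapply Rle_trans; [apply profile_holder; lra|].
  rewrite <- sqrt_1; apply sqrt_le_1_alt; rewrite Rminus_0_r, Rabs_pos_eq; lra.
Qed.

(** The ridge error that makes the [(n+1)^2] monomial errors sum to [eps/2]. *)
Definition ridge_error (n : nat) (eps : R) : R :=
  eps / (2 * (INR (S n) * (INR (S n) * (4 ^ n * (INR (S (2 * n)) ^ (2 * n) * INR d ^ n))))).

Definition total_width (n : nat) (eps : R) : R :=
  INR (S n) * (INR (S n) * mono_width d c n (ridge_error n eps)).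

Lemma ridge_error_pos n eps : 0 < eps -> 0 < ridge_error n eps.
Proof.
  intros He; unfold ridge_error; apply Rdiv_lt_0_compat; [exact He|].
  assert (0 < INR d) by (apply lt_0_INR; lia).
  repeat apply Rmult_lt_0_compat; try apply pow_lt; try apply lt_0_INR; lia || lra.
Qed.

Lemma total_error_eq n eps :
  INR (S n) * (INR (S n) * mono_error d n (ridge_error n eps)) = eps / 2.
Proof.
  assert (0 < INR d) by (apply lt_0_INR; lia).
  unfold mono_error, ridge_error; field.
  repeat split; try apply pow_nonzero; try apply not_0_INR; lia || lra.
Qed.

(** Main estimate for a fixed Bernstein degree [n >= 256 / eps^4]: the
    Bernstein polynomial of the profile, plus [phi(0)], is [eps/2]-close to
    [f] on the ball and is approximated within [eps/2]. *)
Lemma Approx_radial eps n :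
  0 < eps < 1 -> (1 <= n)%nat -> 256 / eps ^ 4 <= INR n ->
  Approx d sigma (fun x => phi (normR d x)) (total_width n eps) eps.
Proof.
  intros He Hn Hn2.
  assert (Hgrid : forall k, (k <= n)%nat -> Rabs (profile (INR k / INR n)) <= 1)
    by (intros k Hk; apply profile_bound, grid_in_unit; lia).
  assert (A := Approx_add _ _ _ _ _ _ _ _
                 (Approx_bernstein d Hd sigma c Hc n profile (ridge_error n eps)
                    (ridge_error_pos n eps (proj1 He)) Hgrid)
                 (Approx_const d sigma (phi 0))).
  rewrite Rplus_0_r, total_error_eq, Rplus_0_r in A.
  assert (Hclose : forall x, normR d x <= 1 ->
            Rabs (sumR (S n) (fun k => profile (INR k / INR n) * bern n k (sqnorm d x)) + phi 0
                  - phi (normR d x)) <= eps / 2).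
  { intros x Hx.
    assert (Ht : 0 <= sqnorm d x <= 1).
    { split; [apply sqnorm_nonneg|]; unfold normR in Hx; fold (sqnorm d x) in Hx.
      pose proof (sqrt_sqrt (sqnorm d x) (sqnorm_nonneg d x)); pose proof (sqrt_pos (sqnorm d x)).
      nra. }
    destruct n as [|m]; [lia|].
    pose proof (bernstein_holder profile m (sqnorm d x) (eps / 4) Ht ltac:(lra) profile_holder).
    pose proof (bernstein_degree_enough eps (S m) (proj1 He) ltac:(lia) Hn2).
    replace (phi (normR d x)) with (profile (sqnorm d x) + phi 0)
      by (unfold profile, normR, sqnorm; ring).
    match goal with |- Rabs (?B + phi 0 - (?P + phi 0)) <= _ =>
      replace (B + phi 0 - (P + phi 0)) with (B - P) by ring end.
    lra. }
  apply (Approx_mono _ _ _ _ _ _ _ _ (Approx_close _ _ _ _ _ _ _ A Hclose));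
    [unfold total_width; lra|lra|reflexivity].
Qed.

End Radial.

Lemma total_width_eq d c n eps :
  (1 <= d)%nat -> 0 < eps ->
  total_width d c n eps
  = 2 * c * (INR (2 * n) * (INR (S n) ^ 4 * (2 ^ (2 * n) * (4 ^ n
      * (INR (S (2 * n)) ^ (2 * n) * (INR d ^ n * (INR d ^ n * / eps))))))).
Proof.
  intros Hd He; assert (0 < INR d) by (apply lt_0_INR; lia).
  unfold total_width, mono_width, ridge_error; field.
  repeat split; try apply pow_nonzero; try apply not_0_INR; lia || lra.
Qed.

(** With [X = d/eps] and [Y = 1000 X^4], every factor of the total width is
    at most [Y] or [Y^n], so the width is at most [2c Y^(12n)]. *)
Lemma total_width_le_pow d c n eps :
  (2 <= d)%nat -> 1 <= c -> 0 < eps < 1 -> (1 <= n)%nat -> INR n <= 257 / eps ^ 4 ->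
  total_width d c n eps <= 2 * c * (1000 * (INR d / eps) ^ 4) ^ (12 * n).
Proof.
  intros Hd Hc He Hn Hn2; rewrite total_width_eq by (lia || lra).
  set (u := / eps); set (X := INR d / eps); set (Y := 1000 * X ^ 4).
  assert (Hu : 1 < u) by (unfold u; rewrite <- Rinv_1; apply Rinv_lt_contravar; lra).
  assert (Hdd : 2 <= INR d) by (apply (le_INR 2); exact Hd).
  assert (HX : X = INR d * u) by reflexivity.
  assert (HX2 : 2 < X) by (rewrite HX; nra).
  assert (HuX : u ^ 4 <= X ^ 4) by (apply pow_incr; rewrite HX; nra).
  assert (HXY : X <= Y).
  { assert (X ^ 1 <= X ^ 4) by (apply Rle_pow; lra || lia); simpl in *; unfold Y; nra. }
  assert (Hn4 : INR n <= 257 * X ^ 4)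
    by (unfold u in HuX; rewrite pow_inv in HuX; unfold Rdiv in Hn2; nra).
  assert (HX4 : 1 <= X ^ 4) by (apply pow_R1_Rle; lra).
  assert (HuY : u <= Y) by (assert (u ^ 1 <= u ^ 4) by (apply Rle_pow; lra || lia); simpl in *; unfold Y; nra).
  assert (H2n : INR (2 * n) <= Y) by (rewrite mult_INR; simpl INR; unfold Y; lra).
  assert (HSn : INR (S n) <= Y) by (rewrite S_INR; unfold Y; lra).
  assert (HS2n : INR (S (2 * n)) <= Y) by (rewrite S_INR, mult_INR; simpl INR; unfold Y; nra).
  assert (HdY : INR d <= Y) by (rewrite HX in HXY; nra).
  assert (P : forall k, 0 <= INR k) by apply pos_INR.
  assert (HY : 1 <= Y) by (unfold Y; nra).
  assert (Hpow : forall a k, 0 <= a <= Y -> 0 <= a ^ k <= Y ^ k)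
    by (intros a k Ha; split; [apply pow_le|apply pow_incr]; lra).
  destruct (Hpow (INR (S n)) 4%nat) as [? ?]; [split; auto|].
  destruct (Hpow 4 n) as [? ?]; [unfold Y; split; lra|].
  destruct (Hpow (INR (S (2 * n))) (2 * n)%nat) as [? ?]; [split; auto|].
  destruct (Hpow (INR d) n) as [? ?]; [split; auto|].
  assert (E2 : 2 ^ (2 * n) = 4 ^ n) by (rewrite pow_mult; f_equal; ring).
  assert (Hu0 : 0 <= u) by lra.
  clearbody Y.
  apply Rle_trans with (2 * c * (Y * (Y ^ 4 * (Y ^ n * (Y ^ n * (Y ^ (2 * n) * (Y ^ n * (Y ^ n * Y)))))))).
  - rewrite E2; apply Rmult_le_compat_l; [lra|].
    repeat (apply Rmult_le_compat; [repeat apply Rmult_le_pos; auto|repeat apply Rmult_le_pos; auto| |]);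
      solve [auto|lra].
  - apply Rmult_le_compat_l; [lra|].
    replace (Y * (Y ^ 4 * (Y ^ n * (Y ^ n * (Y ^ (2 * n) * (Y ^ n * (Y ^ n * Y)))))))
      with ((Y ^ n) ^ 6 * Y ^ 6)
      by (replace (2 * n)%nat with (n + n)%nat by lia; rewrite pow_add; ring).
    rewrite Nat.mul_comm, pow_mult.
    assert (HYn : Y <= Y ^ n) by (rewrite <- pow_1 at 1; apply Rle_pow; lia || lra).
    replace ((Y ^ n) ^ 12) with ((Y ^ n) ^ 6 * (Y ^ n) ^ 6) by ring.
    apply Rmult_le_compat_l; [apply pow_le; lra|apply pow_incr; lra].
Qed.

Lemma exp_le_mono a b : a <= b -> exp a <= exp b.
Proof. intros [H|H]; [left; apply exp_increasing; exact H|subst; lra]. Qed.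

Lemma ln_le_mono a b : 0 < a -> a <= b -> ln a <= ln b.
Proof. intros Ha [H|H]; [left; apply ln_increasing; auto|subst; lra]. Qed.

Definition width_const (c : R) : R := ln (2 * c) / ln 2 + 43176.

Lemma width_const_pos c : 1 <= c -> 0 < width_const c.
Proof.
  intros Hc; unfold width_const.
  assert (0 < ln 2) by (rewrite <- ln_1; apply ln_increasing; lra).
  assert (0 <= ln (2 * c)) by (rewrite <- ln_1; apply ln_le_mono; lra).
  assert (0 <= ln (2 * c) / ln 2)
    by (apply Rmult_le_pos; [lra|left; apply Rinv_0_lt_compat; lra]); lra.
Qed.

(** Taking logarithms: [ln (2c Y^(12n)) <= C eps^-9 ln (d/eps)], using
    [ln 1000 <= 10 ln 2 <= 10 ln X] and [n <= 257 eps^-4 <= 257 eps^-9]. *)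
Lemma total_width_le d c n eps :
  (2 <= d)%nat -> 1 <= c -> 0 < eps < 1 -> (1 <= n)%nat -> INR n <= 257 / eps ^ 4 ->
  total_width d c n eps <= exp (width_const c * / eps ^ 9 * ln (INR d / eps)).
Proof.
  intros Hd Hc He Hn Hn2.
  eapply Rle_trans; [apply total_width_le_pow; auto|].
  set (X := INR d / eps); set (u := / eps).
  assert (Hu : 1 < u) by (unfold u; rewrite <- Rinv_1; apply Rinv_lt_contravar; lra).
  assert (HX : 2 < X)
    by (assert (2 <= INR d) by (apply (le_INR 2); exact Hd); unfold X, Rdiv; fold u; nra).
  assert (Hu9 : 1 <= u ^ 9) by (apply pow_R1_Rle; lra).
  assert (Hnu : INR n <= 257 * u ^ 9).
  { assert (u ^ 4 <= u ^ 9) by (apply Rle_pow; lra || lia).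
    unfold Rdiv in Hn2; rewrite <- pow_inv in Hn2; fold u in Hn2; lra. }
  assert (HY : 0 < 1000 * X ^ 4) by (apply Rmult_lt_0_compat; [lra|apply pow_lt; lra]).
  rewrite <- (exp_ln (2 * c * _)) by (apply Rmult_lt_0_compat; [lra|apply pow_lt; lra]).
  apply exp_le_mono; rewrite <- pow_inv; fold u.
  rewrite (ln_mult (2 * c)), ln_pow, (ln_mult 1000), ln_pow by (try apply pow_lt; lra).
  assert (L2 : 0 < ln 2) by (rewrite <- ln_1; apply ln_increasing; lra).
  assert (L2X : ln 2 <= ln X) by (apply ln_le_mono; lra).
  assert (L1000 : ln 1000 <= 10 * ln 2).
  { replace 10 with (INR 10) by (simpl; ring); rewrite <- ln_pow by lra.
    apply ln_le_mono; [lra|simpl; lra]. }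
  assert (Lc : 0 <= ln (2 * c)) by (rewrite <- ln_1; apply ln_le_mono; lra).
  assert (Lcu : ln (2 * c) <= ln (2 * c) / ln 2 * u ^ 9 * ln X).
  { apply Rle_trans with (ln (2 * c) / ln 2 * ln 2); [right; field; lra|].
    assert (0 <= ln (2 * c) / ln 2) by (apply Rmult_le_pos; [lra|left; apply Rinv_0_lt_compat; lra]).
    rewrite Rmult_assoc; apply Rmult_le_compat_l; [lra|nra]. }
  assert (Lnu : INR (12 * n) * (ln 1000 + INR 4 * ln X) <= 43176 * u ^ 9 * ln X).
  { rewrite mult_INR; replace (INR 12) with 12 by (simpl; ring); replace (INR 4) with 4 by (simpl; ring).
    apply Rle_trans with (12 * INR n * (14 * ln X)); [|nra].
    apply Rmult_le_compat_l; [pose proof (pos_INR n); lra|lra]. }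
  unfold width_const; lra.
Qed.

Lemma bernstein_degree_exists eps :
  0 < eps < 1 ->
  exists n : nat, (1 <= n)%nat /\ 256 / eps ^ 4 <= INR n /\ INR n <= 257 / eps ^ 4.
Proof.
  intros He; set (r := 256 / eps ^ 4).
  assert (He4 : 0 < eps ^ 4 <= 1)
    by (split; [apply pow_lt; lra|rewrite <- (pow1 4); apply pow_incr; lra]).
  assert (Hinv : 1 <= / eps ^ 4) by (rewrite <- Rinv_1; apply Rinv_le_contravar; lra).
  assert (Hr : 256 <= r) by (unfold r, Rdiv; nra).
  destruct (archimed r) as [Hup1 Hup2].
  assert (Hz : (0 <= up r)%Z) by (apply le_IZR; lra).
  exists (Z.to_nat (up r)).
  assert (Hn : INR (Z.to_nat (up r)) = IZR (up r)) by (rewrite INR_IZR_INZ, Z2Nat.id; auto).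
  rewrite Hn; split; [apply (INR_le 1); rewrite Hn; simpl; lra|].
  unfold r, Rdiv in *; lra.
Qed.

Theorem theorem1 :
  forall sigma : R -> R,
  (exists c, Assumption1 sigma c) ->
  exists C : R, 0 < C /\
  forall (d : nat) (eps : R) (phi : R -> R),
    (2 <= d)%nat -> 0 < eps < 1 ->
    (forall x y : nat -> R,
        Rabs (phi (normR d x) - phi (normR d y)) <= normR d (fun k => x k - y k)) ->
    exists (w : nat) (v b : nat -> R) (W : nat -> nat -> R) (b0 : R),
      INR w <= exp (C * / eps ^ 9 * ln (INR d / eps)) /\
      forall x : nat -> R, normR d x <= 1 ->
        Rabs (sumR w (fun i => v i * sigma (dotR d (W i) x + b i)) + b0
              - phi (normR d x)) <= eps.
Proof.
  intros sigma [c Hc].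
  exists (width_const c); split; [apply width_const_pos, (proj1 Hc)|].
  intros d eps phi Hd He Hphi.
  destruct (bernstein_degree_exists eps He) as (n & Hn & Hlow & Hhigh).
  destruct (Approx_radial d ltac:(lia) sigma c Hc phi Hphi eps n He Hn Hlow)
    as (w & v & b & W & b0 & Hw & Happrox).
  exists w, v, b, W, b0; split; [|exact Happrox].
  eapply Rle_trans; [exact Hw|].
  apply total_width_le; [exact Hd|exact (proj1 Hc)|exact He|exact Hn|exact Hhigh].
Qed.
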